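(* Let $\tau\in F_2$ and let $Z=X+\tau Y\in\mathbb{C}^2$ with $X=(x_1,x_2),Y=(y_1,y_2)\in\mathbb{R}^2$, $(X,Y)\ne(0,0)$, $\|(X,Y)\|:=\max\{|x_1|,|x_2|,|y_1|,|y_2|\}\le\frac12$, and $\theta_{a,b}(Z,\tau)\neq 0$ for $a=(\tfrac12,\tfrac12)$, $b=(0,\tfrac12)$. Put $\Lambda(Z)=-\log\big(|\theta_{a,b}(Z,\tau)|\,e^{-\pi\,{}^t\operatorname{Im}Z(\operatorname{Im}\tau)^{-1}\operatorname{Im}Z}\big)$ and $\delta(a+Y)=\min\{d(\tfrac12+y_1,\mathbb{Z}),d(\tfrac12+y_2,\mathbb{Z})\}$. Then $$\Lambda(Z)\ge \pi\big(\operatorname{Tr}(\operatorname{Im}\tau)-2\operatorname{Im}\tau_{12}\big)\delta(a+Y)^2-\log\Big(4+\frac32\operatorname{Tr}(\operatorname{Im}\tau)\Big)+\log\frac{1}{\|(X,Y)\|}-\log C_3(Y),$$ where $C_3(Y)=\max_{i\in\{1,2\}}8\pi\Big(\frac4\pi+2|y_i|+\frac12\Big(\sqrt{y_i^2+\frac8\pi}+2\Big)^2+\frac12\Big)$ (in particular $C_3(Y)\le 239{,}2$).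
   Context: $F_2$ is the standard Siegel fundamental domain for $\mathrm{Sp}_4(\mathbb{Z})$ acting on symmetric complex $2\times2$ matrices $\tau=\begin{pmatrix}\tau_1&\tau_{12}\\ \tau_{12}&\tau_2\end{pmatrix}$ with $\operatorname{Im}\tau>0$; every $\tau\in F_2$ satisfies $|\operatorname{Re}\tau_{ij}|\le 1/2$, $\operatorname{Im}\tau_2\ge\operatorname{Im}\tau_1\ge 2\operatorname{Im}\tau_{12}\ge 0$, $\operatorname{Im}\tau_1\ge\sqrt3/2$. Theta function with characteristic $a,b\in\{0,\frac12\}^2$: $\theta_{a,b}(Z,\tau)=\sum_{n\in\mathbb{Z}^2}\exp\big(2i\pi(\tfrac12{}^t(n+a)\tau(n+a)+{}^t(n+a)(Z+b))\big)$. $d(x,\mathbb{Z})$ is the distance from $x$ to the nearest integer. *)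

From Stdlib Require Import Reals ZArith.
Open Scope R_scope.

Definition Cx : Type := (R * R)%type.
Definition Cre (z : Cx) : R := fst z.
Definition Cim (z : Cx) : R := snd z.
Definition RtoC (x : R) : Cx := (x, 0).
Definition Cadd (z w : Cx) : Cx := (Cre z + Cre w, Cim z + Cim w).
Definition Csub (z w : Cx) : Cx := (Cre z - Cre w, Cim z - Cim w).
Definition Cmul (z w : Cx) : Cx :=
  (Cre z * Cre w - Cim z * Cim w, Cre z * Cim w + Cim z * Cre w).
Definition Cscal (r : R) (z : Cx) : Cx := (r * Cre z, r * Cim z).
Definition Cmod (z : Cx) : R := sqrt (Cre z ^ 2 + Cim z ^ 2).
Definition Cexp (z : Cx) : Cx :=
  (exp (Cre z) * cos (Cim z), exp (Cre z) * sin (Cim z)).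
Definition Ci : Cx := (0, 1).

Record M2Z := mkM2Z { e11 : Z; e12 : Z; e21 : Z; e22 : Z }.
Definition M2Z_mul (A B : M2Z) : M2Z :=
  mkM2Z (e11 A * e11 B + e12 A * e21 B)%Z (e11 A * e12 B + e12 A * e22 B)%Z
        (e21 A * e11 B + e22 A * e21 B)%Z (e21 A * e12 B + e22 A * e22 B)%Z.
Definition M2Z_tr (A : M2Z) : M2Z := mkM2Z (e11 A) (e21 A) (e12 A) (e22 A).
Definition M2Z_sub (A B : M2Z) : M2Z :=
  mkM2Z (e11 A - e11 B)%Z (e12 A - e12 B)%Z (e21 A - e21 B)%Z (e22 A - e22 B)%Z.
Definition M2Z_id : M2Z := mkM2Z 1 0 0 1.

(* (A B; C D) in Sp_4(Z), i.e. tM J M = J with J = (0 I; -I 0):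
   tA C = tC A, tB D = tD B, tA D - tC B = I. *)
Definition is_Sp4Z (A B Cm D : M2Z) : Prop :=
  M2Z_mul (M2Z_tr A) Cm = M2Z_mul (M2Z_tr Cm) A /\
  M2Z_mul (M2Z_tr B) D = M2Z_mul (M2Z_tr D) B /\
  M2Z_sub (M2Z_mul (M2Z_tr A) D) (M2Z_mul (M2Z_tr Cm) B) = M2Z_id.

Definition det_Ctau_D (Cm D : M2Z) (t1 t12 t2 : Cx) : Cx :=
  let c11 := RtoC (IZR (e11 Cm)) in let c12 := RtoC (IZR (e12 Cm)) in
  let c21 := RtoC (IZR (e21 Cm)) in let c22 := RtoC (IZR (e22 Cm)) in
  let m11 := Cadd (Cadd (Cmul c11 t1) (Cmul c12 t12)) (RtoC (IZR (e11 D))) in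
  let m12 := Cadd (Cadd (Cmul c11 t12) (Cmul c12 t2)) (RtoC (IZR (e12 D))) in
  let m21 := Cadd (Cadd (Cmul c21 t1) (Cmul c22 t12)) (RtoC (IZR (e21 D))) in
  let m22 := Cadd (Cadd (Cmul c21 t12) (Cmul c22 t2)) (RtoC (IZR (e22 D))) in
  Csub (Cmul m11 m22) (Cmul m12 m21).

Definition in_H2 (t1 t12 t2 : Cx) : Prop :=
  0 < Cim t1 /\ 0 < Cim t1 * Cim t2 - Cim t12 ^ 2.

(* Siegel's standard fundamental domain F_2 for Sp_4(Z):
   (i) |det(C tau + D)| >= 1 for all (A B; C D) in Sp_4(Z),
   (ii) Im tau Minkowski reduced: 0 <= 2 Im tau12 <= Im tau1 <= Im tau2,
   (iii) |Re tau_ij| <= 1/2. *)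
Definition in_F2 (t1 t12 t2 : Cx) : Prop :=
  in_H2 t1 t12 t2 /\
  (forall A B Cm D : M2Z, is_Sp4Z A B Cm D ->
     1 <= Cmod (det_Ctau_D Cm D t1 t12 t2)) /\
  (0 <= 2 * Cim t12 /\ 2 * Cim t12 <= Cim t1 /\ Cim t1 <= Cim t2) /\
  (Rabs (Cre t1) <= 1/2 /\ Rabs (Cre t12) <= 1/2 /\ Rabs (Cre t2) <= 1/2).

(* term for n = (n1, n2):
   exp(2 i pi (1/2 t(n+a) tau (n+a) + t(n+a)(Z + b))) *)
Definition theta_term (a1 a2 b1 b2 : R) (z1 z2 t1 t12 t2 : Cx) (n1 n2 : Z) : Cx :=
  let m1 := IZR n1 + a1 in let m2 := IZR n2 + a2 in
  let quad := Cadd (Cadd (Cscal (m1 * m1) t1) (Cscal (2 * m1 * m2) t12))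
                   (Cscal (m2 * m2) t2) in
  let lin := Cadd (Cscal m1 (Cadd z1 (RtoC b1))) (Cscal m2 (Cadd z2 (RtoC b2))) in
  let w := Cadd (Cscal (1/2) quad) lin in
  Cexp (Cmul (Cscal (2 * PI) Ci) w).

(* square partial sum over n in [-N, N]^2 *)
Definition theta_partial (a1 a2 b1 b2 : R) (z1 z2 t1 t12 t2 : Cx) (N : nat) : Cx :=
  let f i j := theta_term a1 a2 b1 b2 z1 z2 t1 t12 t2
                 (Z.of_nat i - Z.of_nat N)%Z (Z.of_nat j - Z.of_nat N)%Z in
  (sum_f_R0 (fun i => sum_f_R0 (fun j => Cre (f i j)) (2 * N)) (2 * N),
   sum_f_R0 (fun i => sum_f_R0 (fun j => Cim (f i j)) (2 * N)) (2 * N)).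

Definition is_theta (a1 a2 b1 b2 : R) (z1 z2 t1 t12 t2 : Cx) (th : Cx) : Prop :=
  Un_cv (fun N => Cre (theta_partial a1 a2 b1 b2 z1 z2 t1 t12 t2 N)) (Cre th) /\
  Un_cv (fun N => Cim (theta_partial a1 a2 b1 b2 z1 z2 t1 t12 t2 N)) (Cim th).

Definition distZ (x : R) : R :=
  Rmin (x - IZR (Int_part x)) (IZR (Int_part x) + 1 - x).

(* t(Im Z) (Im tau)^{-1} (Im Z) *)
Definition imZ_quad (t1 t12 t2 : Cx) (v1 v2 : R) : R :=
  let d := Cim t1 * Cim t2 - Cim t12 ^ 2 in
  (Cim t2 * v1 * v1 - 2 * Cim t12 * v1 * v2 + Cim t1 * v2 * v2) / d.

Definition C3_one (y : R) : R :=
  8 * PI * (4 / PI + 2 * Rabs y + 1/2 * (sqrt (y ^ 2 + 8 / PI) + 2) ^ 2 + 1/2).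
Definition C3 (y1 y2 : R) : R := Rmax (C3_one y1) (C3_one y2).

From Stdlib Require Import Reals ZArith Lra Lia Psatz.
Open Scope R_scope.

(** Index the theta series by the half-integral vectors [m = k + a]; let [B = Im tau],
    [q] its quadratic form, and [Y] the real vector with [Im Z = B Y].  Completing the
    square, the term of index [m] has size [exp (pi q(Y) - pi q(m + Y))].  As [a] and
    [b] are odd, the terms of indices [m] and [-m] have opposite phases up to an angle
    linear in [(X, Y)], so their sum is at most [2 pi ||(X,Y)|| O(|m|)] times their
    size.  For reduced [B], [q(u) >= (Tr B - 2 B12) delta^2 + (B11/2) sum_i (u_i^2 - d_i^2)],
    and since [B11 >= sqrt 3 / 2] the remaining one-dimensional sums are geometric.
    This bounds the symmetric partial sums over [[-N, N)^2]; the square partial sums of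
    the definition differ from them by an edge tending to 0, so the bound holds for
    [theta], and [tIm Z B^(-1) Im Z = q(Y)], [C3(Y) >= 54 pi] give the theorem after
    taking logarithms.  The file develops finite sums, elementary inequalities, the
    pairing estimate, reduced forms and Gaussian sums, limits, then the estimates on
    the theta terms (section [ThetaEstimates]), and finally the theorem. *)

Fixpoint sumn (f : nat -> R) (n : nat) : R :=
  match n with O => 0 | S k => sumn f k + f k end.

(* Stdlib's [sum_f_R0 f n] has [n + 1] terms. *)
Lemma sum_f_R0_sumn (f : nat -> R) (n : nat) : sum_f_R0 f n = sumn f (S n).
Proof. induction n; simpl; [ring|]. rewrite IHn. simpl. ring. Qed.

Lemma sumn_ext (f g : nat -> R) (n : nat) :
  (forall i, (i < n)%nat -> f i = g i) -> sumn f n = sumn g n.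
Proof.
  induction n; intros H; simpl; auto.
  rewrite IHn by (intros; apply H; lia). rewrite H by lia. reflexivity.
Qed.

Lemma sumn_le (f g : nat -> R) (n : nat) :
  (forall i, (i < n)%nat -> f i <= g i) -> sumn f n <= sumn g n.
Proof.
  induction n; intros H; simpl; [lra|].
  assert (sumn f n <= sumn g n) by (apply IHn; intros; apply H; lia).
  assert (f n <= g n) by (apply H; lia). lra.
Qed.

Lemma sumn_const (c : R) (n : nat) : sumn (fun _ => c) n = INR n * c.
Proof. induction n; simpl sumn; [simpl; ring|]. rewrite IHn, S_INR. ring. Qed.

Lemma sumn_nonneg (f : nat -> R) (n : nat) :
  (forall i, (i < n)%nat -> 0 <= f i) -> 0 <= sumn f n.
Proof.
  intros H. apply Rle_trans with (sumn (fun _ => 0) n).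
  - rewrite sumn_const. lra.
  - apply sumn_le; auto.
Qed.

Lemma sumn_plus (f g : nat -> R) (n : nat) :
  sumn (fun i => f i + g i) n = sumn f n + sumn g n.
Proof. induction n; simpl; [lra|]. rewrite IHn; ring. Qed.

Lemma sumn_scal (c : R) (f : nat -> R) (n : nat) :
  sumn (fun i => c * f i) n = c * sumn f n.
Proof. induction n; simpl; [ring|]. rewrite IHn; ring. Qed.

Lemma sumn_abs (f : nat -> R) (n : nat) :
  Rabs (sumn f n) <= sumn (fun i => Rabs (f i)) n.
Proof.
  induction n; simpl; [rewrite Rabs_R0; lra|].
  eapply Rle_trans; [apply Rabs_triang | lra].
Qed.

Lemma sumn_split (f : nat -> R) (a b : nat) :
  sumn f (a + b) = sumn f a + sumn (fun i => f (a + i)%nat) b.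
Proof.
  induction b.
  - rewrite Nat.add_0_r. simpl. ring.
  - rewrite Nat.add_succ_r. simpl. rewrite IHb. ring.
Qed.

Lemma sumn_rev (f : nat -> R) (n : nat) :
  sumn f n = sumn (fun i => f (n - 1 - i)%nat) n.
Proof.
  revert f; induction n; intros f; [reflexivity|].
  replace (S n) with (1 + n)%nat at 2 by lia. rewrite sumn_split.
  cbn [sumn]. rewrite IHn.
  replace (S n - 1 - 0)%nat with n by lia.
  rewrite (sumn_ext (fun i => f (S n - 1 - (1 + i))%nat) (fun i => f (n - 1 - i)%nat)).
  - ring.
  - intros; f_equal; lia.
Qed.

Lemma sumn_two_sided_bound (f a : nat -> R) (N : nat) :
  (forall j, (j < N)%nat -> f (N - 1 - j)%nat <= a j /\ f (N + j)%nat <= a j) ->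
  sumn f (N + N) <= 2 * sumn a N.
Proof.
  intros H. rewrite sumn_split, (sumn_rev f N).
  assert (sumn (fun i => f (N - 1 - i)%nat) N <= sumn a N) by (apply sumn_le; apply H).
  assert (sumn (fun i => f (N + i)%nat) N <= sumn a N) by (apply sumn_le; apply H).
  lra.
Qed.

Definition sum2 (F : nat -> nat -> R) (M : nat) : R :=
  sumn (fun i => sumn (fun j => F i j) M) M.

Lemma sum2_plus (F G : nat -> nat -> R) (M : nat) :
  sum2 (fun i j => F i j + G i j) M = sum2 F M + sum2 G M.
Proof. unfold sum2. rewrite <- sumn_plus. apply sumn_ext. intros. apply sumn_plus. Qed.

Lemma sum2_le (F G : nat -> nat -> R) (M : nat) :
  (forall i j, (i < M)%nat -> (j < M)%nat -> F i j <= G i j) -> sum2 F M <= sum2 G M.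
Proof. intros H. apply sumn_le. intros. apply sumn_le. intros. apply H; auto. Qed.

Lemma sum2_rev (F : nat -> nat -> R) (M : nat) :
  sum2 F M = sum2 (fun i j => F (M - 1 - i)%nat (M - 1 - j)%nat) M.
Proof. unfold sum2. rewrite sumn_rev. apply sumn_ext. intros. apply sumn_rev. Qed.

Lemma sum2_separable (C c1 c2 : R) (w f v g : nat -> R) (n : nat) :
  sum2 (fun i j => C * (c1 * w i + c2 * v j) * (f i * g j)) n
  = C * (c1 * sumn (fun i => w i * f i) n * sumn g n
         + c2 * sumn f n * sumn (fun j => v j * g j) n).
Proof.
  unfold sum2.
  rewrite (sumn_ext _ (fun i => (C * c1 * sumn g n) * (w i * f i)
                               + (C * c2 * sumn (fun j => v j * g j) n) * f i)).
  - rewrite sumn_plus, !sumn_scal. ring.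
  - intros i Hi.
    rewrite (sumn_ext _ (fun j => (C * c1 * w i * f i) * g j + (C * c2 * f i) * (v j * g j))).
    + rewrite sumn_plus, !sumn_scal. ring.
    + intros; ring.
Qed.
Lemma exp_le_compat (a b : R) : a <= b -> exp a <= exp b.
Proof. intros [H|H]; [left; apply exp_increasing; auto | rewrite H; lra]. Qed.

Lemma ln_le_compat (a b : R) : 0 < a -> a <= b -> ln a <= ln b.
Proof. intros Ha [H|H]; [left; apply ln_increasing; auto | rewrite H; lra]. Qed.

Lemma exp_nat (a : R) (k : nat) : exp (a * INR k) = exp a ^ k.
Proof.
  induction k; [simpl; rewrite Rmult_0_r; apply exp_0|].
  rewrite S_INR. replace (a * (INR k + 1)) with (a * INR k + a) by ring.
  rewrite exp_plus, IHk. simpl. ring.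
Qed.

(** [e^(-5/4) <= 1/3], from [e^(1/4) >= 5/4] and [(5/4)^5 >= 3]. *)
Lemma exp_m5_4 : exp (- (5/4)) <= 1/3.
Proof.
  assert (H : 3 <= exp (5/4)).
  { replace (5/4) with (1/4 * INR 5) by (simpl; field). rewrite exp_nat.
    assert (5/4 <= exp (1/4)) by (pose proof (exp_ineq1_le (1/4)); lra).
    assert ((5/4) ^ 5 <= exp (1/4) ^ 5) by (apply pow_incr; lra). lra. }
  rewrite exp_Ropp. pose proof (exp_pos (5/4)).
  apply (Rmult_le_reg_l (exp (5/4))); auto. rewrite Rinv_r by lra. lra.
Qed.

Lemma exp_geometric (x kap : R) (k : nat) : 5/4 <= kap -> INR k <= x ->
  exp (- kap * x) <= (1/3) ^ k.
Proof.
  intros Hk Hx. pose proof (pos_INR k).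
  apply Rle_trans with (exp (- (5/4) * INR k)).
  - apply exp_le_compat. nra.
  - rewrite exp_nat. apply pow_incr. split; [left; apply exp_pos | apply exp_m5_4].
Qed.

Lemma geometric_sum_le (n : nat) : sumn (fun k => (1/3) ^ k) n <= 3/2.
Proof.
  assert (E : sumn (fun k => (1/3) ^ k) n = 3/2 - 3/2 * (1/3) ^ n).
  { induction n; simpl sumn; [simpl; field|]. rewrite IHn. simpl. field. }
  rewrite E. pose proof (pow_le (1/3) n). lra.
Qed.

Lemma weighted_geometric_sum_le (n : nat) :
  sumn (fun k => (INR k + 1) * (1/3) ^ k) n <= 9/4.
Proof.
  assert (E : sumn (fun k => (INR k + 1) * (1/3) ^ k) n
              = 9/4 - (3/2 * INR n + 9/4) * (1/3) ^ n).
  { induction n; simpl sumn; [simpl; field|]. rewrite IHn, S_INR. simpl. field. }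
  rewrite E. pose proof (pow_le (1/3) n). pose proof (pos_INR n).
  assert (0 <= (3/2 * INR n + 9/4) * (1/3) ^ n) by (apply Rmult_le_pos; lra). lra.
Qed.

Lemma sin_sq_le (g : R) : sin g ^ 2 <= g ^ 2.
Proof.
  assert (H : forall h, 0 < h -> sin h ^ 2 <= h ^ 2).
  { intros h Hh. pose proof (sin_lt_x h Hh). pose proof (SIN_bound h).
    destruct (Rle_dec 1 h); [nra|].
    assert (0 < sin h) by (apply sin_gt_0; pose proof PI2_1; lra). nra. }
  destruct (Rtotal_order g 0) as [Hg|[Hg|Hg]].
  - replace (sin g ^ 2) with (sin (-g) ^ 2) by (rewrite sin_neg; ring).
    replace (g ^ 2) with ((-g) ^ 2) by ring. apply H; lra.
  - subst. rewrite sin_0. lra.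
  - apply H; lra.
Qed.

Lemma exp_diff_bound (s : R) :
  (exp s - exp (- s)) ^ 2 <= 4 * s ^ 2 * (exp s + exp (- s)) ^ 2.
Proof.
  set (X := exp s). set (Y := exp (- s)).
  assert (HXY : X * Y = 1)
    by (unfold X, Y; rewrite <- exp_plus; replace (s + - s) with 0 by ring; apply exp_0).
  assert (HX : 0 < X) by apply exp_pos. assert (HY : 0 < Y) by apply exp_pos.
  assert (HX2 : 1 + 2 * s <= X * X)
    by (unfold X; rewrite <- exp_plus; pose proof (exp_ineq1_le (s + s)); lra).
  assert (HY2 : 1 - 2 * s <= Y * Y)
    by (unfold Y; rewrite <- exp_plus; pose proof (exp_ineq1_le (- s + - s)); lra).
  destruct (Rle_dec 0 s).
  - assert (1 <= X) by (unfold X; pose proof (exp_ineq1_le s); lra).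
    assert (X - Y <= 2 * s * (X + Y)) by nra. nra.
  - assert (1 <= Y) by (unfold Y; pose proof (exp_ineq1_le (-s)); lra).
    assert (Y - X <= - 2 * s * (X + Y)) by nra. nra.
Qed.

Lemma cos_shift_odd_pi (x : R) (k : Z) : cos (x + (2 * IZR k + 1) * PI) = - cos x.
Proof.
  replace (x + (2 * IZR k + 1) * PI) with ((x + 2 * IZR k * PI) + PI) by ring.
  rewrite neg_cos. f_equal.
  destruct (Z_lt_le_dec k 0) as [Hk|Hk].
  - assert (E : k = (- Z.of_nat (Z.to_nat (- k)))%Z) by lia.
    rewrite E, opp_IZR, <- INR_IZR_INZ.
    rewrite <- (cos_period (x + 2 * - INR (Z.to_nat (- k)) * PI) (Z.to_nat (- k))).
    f_equal. ring.
  - assert (E : k = Z.of_nat (Z.to_nat k)) by lia.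
    rewrite E, <- INR_IZR_INZ. apply cos_period.
Qed.

Lemma sqrt_le_sq (a b : R) : 0 <= b -> a <= b ^ 2 -> sqrt a <= b.
Proof. intros. rewrite <- (sqrt_pow2 b) by lra. apply sqrt_le_1_alt; lra. Qed.

Lemma mod_triang (a b c d : R) :
  sqrt ((a + c) ^ 2 + (b + d) ^ 2) <= sqrt (a ^ 2 + b ^ 2) + sqrt (c ^ 2 + d ^ 2).
Proof.
  set (u := sqrt (a ^ 2 + b ^ 2)). set (v := sqrt (c ^ 2 + d ^ 2)).
  assert (Hu : 0 <= u) by apply sqrt_pos. assert (Hv : 0 <= v) by apply sqrt_pos.
  assert (Hu2 : u * u = a ^ 2 + b ^ 2) by (apply sqrt_sqrt; nra).
  assert (Hv2 : v * v = c ^ 2 + d ^ 2) by (apply sqrt_sqrt; nra).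
  assert (Hcs : a * c + b * d <= u * v).
  { assert ((a * c + b * d) ^ 2 <= (u * v) ^ 2).
    { replace ((u * v) ^ 2) with ((u * u) * (v * v)) by ring. rewrite Hu2, Hv2.
      pose proof (pow2_ge_0 (a * d - b * c)). nra. }
    assert (0 <= u * v) by nra. nra. }
  apply sqrt_le_sq; nra.
Qed.

Lemma mod_sum (a b : nat -> R) (n : nat) :
  sqrt (sumn a n ^ 2 + sumn b n ^ 2) <= sumn (fun i => sqrt (a i ^ 2 + b i ^ 2)) n.
Proof.
  induction n as [|n IHn]; cbn [sumn].
  - replace (0 ^ 2 + 0 ^ 2) with 0 by ring. rewrite sqrt_0. lra.
  - eapply Rle_trans; [apply mod_triang | lra].
Qed.

(** Two terms of equal size [E] modulated by [e^(-s)] and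
    [e^s], whose phases differ by [2g] plus an odd multiple of [pi], nearly
    cancel: their sum is of size [(2|s| + |g|) E (e^(-s) + e^s)]. *)
Lemma opposite_pair_bound (E s g A B : R) (k : Z) :
  0 <= E -> A - B = 2 * g + (2 * IZR k + 1) * PI ->
  Cmod (Cadd (E * exp (- s) * cos A, E * exp (- s) * sin A)
             (E * exp s * cos B, E * exp s * sin B))
  <= (2 * Rabs s + Rabs g) * (E * exp (- s) + E * exp s).
Proof.
  intros HE HAB. unfold Cmod, Cadd, Cre, Cim; cbn [fst snd].
  set (X := exp s). set (Y := exp (- s)).
  assert (HXY : X * Y = 1)
    by (unfold X, Y; rewrite <- exp_plus; replace (s + - s) with 0 by ring; apply exp_0).
  assert (HX : 0 < X) by apply exp_pos. assert (HY : 0 < Y) by apply exp_pos.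
  assert (HA : cos A * cos A + sin A * sin A = 1)
    by (pose proof (sin2_cos2 A); unfold Rsqr in *; lra).
  assert (HB : cos B * cos B + sin B * sin B = 1)
    by (pose proof (sin2_cos2 B); unfold Rsqr in *; lra).
  assert (Hphase : cos A * cos B + sin A * sin B = - (1 - 2 * sin g * sin g)).
  { rewrite <- cos_minus, HAB, cos_shift_odd_pi, cos_2a_sin. reflexivity. }
  (* the squared modulus is [E^2 ((X - Y)^2 + 4 sin^2 g)] *)
  assert (Hsq : (E * Y * cos A + E * X * cos B) ^ 2 + (E * Y * sin A + E * X * sin B) ^ 2
                = E * E * ((X - Y) ^ 2 + 4 * sin g ^ 2)).
  { replace ((E * Y * cos A + E * X * cos B) ^ 2 + (E * Y * sin A + E * X * sin B) ^ 2)
      with (E * E * (Y * Y * (cos A * cos A + sin A * sin A)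
                     + X * X * (cos B * cos B + sin B * sin B)
                     + 2 * (X * Y) * (cos A * cos B + sin A * sin B))) by ring.
    rewrite HA, HB, Hphase. replace ((X - Y) ^ 2) with (X * X + Y * Y - 2 * (X * Y)) by ring.
    rewrite HXY. ring. }
  assert (Hd := exp_diff_bound s). fold X Y in Hd. rewrite <- (pow2_abs s) in Hd.
  assert (Hs := sin_sq_le g). rewrite <- (pow2_abs g) in Hs.
  pose proof (Rabs_pos s); pose proof (Rabs_pos g).
  assert (Hsum : 2 <= X + Y) by (pose proof (pow2_ge_0 (X - Y)); nra).
  assert (Hcore : (X - Y) ^ 2 + 4 * sin g ^ 2 <= (X + Y) ^ 2 * (2 * Rabs s + Rabs g) ^ 2).
  { assert (4 <= (X + Y) ^ 2) by nra.
    assert (4 * sin g ^ 2 <= Rabs g ^ 2 * (X + Y) ^ 2) by (pose proof (pow2_ge_0 (Rabs g)); nra).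
    assert (0 <= 4 * Rabs s * Rabs g * (X + Y) ^ 2) by (apply Rmult_le_pos; nra).
    nra. }
  apply sqrt_le_sq.
  - apply Rmult_le_pos; [lra | apply Rplus_le_le_0_compat; apply Rmult_le_pos; lra].
  - rewrite Hsq.
    replace (((2 * Rabs s + Rabs g) * (E * Y + E * X)) ^ 2)
      with (E * E * ((X + Y) ^ 2 * (2 * Rabs s + Rabs g) ^ 2)) by ring.
    apply Rmult_le_compat_l; nra.
Qed.

Lemma pairing_bound (T : nat -> nat -> Cx) (W : nat -> nat -> R) (M : nat) :
  (forall i j, (i < M)%nat -> (j < M)%nat ->
     Cmod (Cadd (T i j) (T (M - 1 - i)%nat (M - 1 - j)%nat))
     <= W i j + W (M - 1 - i)%nat (M - 1 - j)%nat) ->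
  sqrt (sum2 (fun i j => Cre (T i j)) M ^ 2 + sum2 (fun i j => Cim (T i j)) M ^ 2)
  <= sum2 W M.
Proof.
  intros Hpair.
  set (rev := fun (F : nat -> nat -> R) i j => F (M - 1 - i)%nat (M - 1 - j)%nat).
  assert (Hdouble : forall F : nat -> nat -> R,
             2 * sum2 F M = sum2 (fun i j => F i j + rev F i j) M).
  { intros F. rewrite sum2_plus. unfold rev; cbv beta. rewrite <- (sum2_rev F). ring. }
  assert (Hmod : sqrt ((2 * sum2 (fun i j => Cre (T i j)) M) ^ 2
                       + (2 * sum2 (fun i j => Cim (T i j)) M) ^ 2) <= 2 * sum2 W M).
  { rewrite !Hdouble. eapply Rle_trans; [apply mod_sum|].
    eapply Rle_trans; [apply sumn_le; intros i Hi; apply mod_sum|].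
    eapply Rle_trans; [apply sum2_le; intros i j Hi Hj; apply (Hpair i j Hi Hj)|].
    apply Rle_refl. }
  replace ((2 * sum2 (fun i j => Cre (T i j)) M) ^ 2 + (2 * sum2 (fun i j => Cim (T i j)) M) ^ 2)
    with (2 ^ 2 * (sum2 (fun i j => Cre (T i j)) M ^ 2 + sum2 (fun i j => Cim (T i j)) M ^ 2))
    in Hmod by ring.
  rewrite sqrt_mult, sqrt_pow2 in Hmod by nra. lra.
Qed.

Lemma abs_le_between (a b : R) : Rabs a <= b -> - b <= a <= b.
Proof.
  intros. pose proof (Rle_abs a). pose proof (Rle_abs (- a)). rewrite Rabs_Ropp in *. lra.
Qed.

Lemma abs_lin_comb (p1 p2 a1 a2 B1 B2 : R) : Rabs a1 <= B1 -> Rabs a2 <= B2 ->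
  Rabs (p1 * a1 + p2 * a2) <= Rabs p1 * B1 + Rabs p2 * B2.
Proof.
  intros H1 H2. eapply Rle_trans; [apply Rabs_triang|]. rewrite !Rabs_mult.
  pose proof (Rabs_pos p1); pose proof (Rabs_pos p2).
  apply Rplus_le_compat; apply Rmult_le_compat_l; auto.
Qed.

Lemma IZR_cases (k : Z) : 0 <= IZR k \/ IZR k <= -1.
Proof.
  destruct (Z_lt_le_dec k 0); [right | left]; apply IZR_le; lia.
Qed.

Lemma IZR_shift (i N : nat) : IZR (Z.of_nat i - Z.of_nat N) = INR i - INR N.
Proof. rewrite minus_IZR, <- !INR_IZR_INZ. reflexivity. Qed.

Definition qform (c1 c12 c2 u1 u2 : R) : R := c1 * u1 ^ 2 + 2 * c12 * u1 * u2 + c2 * u2 ^ 2.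

Lemma reduced_form_lower_bound (c1 c12 c2 u1 u2 d1 d2 del : R) :
  0 <= 2 * c12 -> 2 * c12 <= c1 -> c1 <= c2 ->
  0 <= del -> del <= d1 -> del <= d2 -> d1 ^ 2 <= u1 ^ 2 -> d2 ^ 2 <= u2 ^ 2 ->
  (c1 + c2 - 2 * c12) * del ^ 2 + c1 / 2 * (u1 ^ 2 - d1 ^ 2) + c1 / 2 * (u2 ^ 2 - d2 ^ 2)
  <= qform c1 c12 c2 u1 u2.
Proof.
  intros. unfold qform.
  assert (0 <= c12 * (u1 + u2) ^ 2) by (apply Rmult_le_pos; [lra | apply pow2_ge_0]).
  assert (del ^ 2 <= d1 ^ 2) by nra. assert (del ^ 2 <= d2 ^ 2) by nra.
  assert (0 <= (c1 / 2 - c12) * (u1 ^ 2 - del ^ 2)) by (apply Rmult_le_pos; lra).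
  assert (0 <= (c2 - c12 - c1 / 2) * (u2 ^ 2 - del ^ 2)) by (apply Rmult_le_pos; lra).
  assert (0 <= c1 / 2 * (d1 ^ 2 - del ^ 2)) by (apply Rmult_le_pos; lra).
  assert (0 <= c1 / 2 * (d2 ^ 2 - del ^ 2)) by (apply Rmult_le_pos; lra).
  nra.
Qed.

Lemma distZ_bounds (r : R) : 0 <= r <= 1 ->
  0 <= distZ r /\ distZ r <= r /\ distZ r <= 1 - r.
Proof.
  intros Hr. destruct (base_Int_part r) as [H1 H2].
  assert (Hz : (Int_part r = 0 \/ Int_part r = 1)%Z).
  { assert (-1 < IZR (Int_part r)) by lra. assert (IZR (Int_part r) < 2) by lra.
    apply lt_IZR in H. apply lt_IZR in H0. lia. }
  unfold distZ. destruct Hz as [Hz|Hz]; rewrite Hz in *.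
  - unfold Rmin; destruct (Rle_dec _ _); lra.
  - assert (r = 1) by lra. subst. unfold Rmin; destruct (Rle_dec _ _); lra.
Qed.

Lemma int_translate_sq_ge (k : Z) (r d : R) : 0 <= d -> d <= r -> d <= 1 - r ->
  d ^ 2 <= (IZR k + r) ^ 2.
Proof. intros. destruct (IZR_cases k); nra. Qed.

Definition gauss1 (kap y d k : R) : R := exp (- kap * ((k + (1/2 + y)) ^ 2 - d ^ 2)).

Lemma gauss1_geometric (kap y : R) (j : nat) : 5/4 <= kap -> -1/2 <= y <= 1/2 ->
  let d := distZ (1/2 + y) in
  gauss1 kap y d (- INR j - 1) <= (1/3) ^ j /\ gauss1 kap y d (INR j) <= (1/3) ^ j.
Proof.
  intros Hk Hy d. destruct (distZ_bounds (1/2 + y)) as [D0 [D1 D2]]; [lra|].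
  fold d in D0, D1, D2. pose proof (pos_INR j).
  assert (Hj : INR j <= INR j * INR j).
  { destruct j; [simpl; lra|]. rewrite S_INR. pose proof (pos_INR j). nra. }
  split; apply exp_geometric; auto; nra.
Qed.

Lemma gauss1_sums (kap y : R) (N : nat) : 5/4 <= kap -> -1/2 <= y <= 1/2 ->
  let g := fun i => gauss1 kap y (distZ (1/2 + y)) (INR i - INR N) in
  sumn g (N + N) <= 3 /\
  sumn (fun i => Rabs (INR i - INR N + 1/2) * g i) (N + N) <= 9/2.
Proof.
  intros Hk Hy g.
  assert (Hlow : forall j, (j < N)%nat -> INR (N - 1 - j) - INR N = - INR j - 1)
    by (intros j Hj; rewrite !minus_INR by lia; simpl; ring).
  assert (Hhigh : forall j, INR (N + j) - INR N = INR j) by (intros; rewrite plus_INR; ring).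
  assert (Hg : forall i, 0 <= g i) by (intros; left; apply exp_pos).
  split.
  - eapply Rle_trans.
    { apply (sumn_two_sided_bound g (fun j => (1/3) ^ j)). intros j Hj.
      unfold g. rewrite Hlow, Hhigh by auto. apply gauss1_geometric; auto. }
    pose proof (geometric_sum_le N). lra.
  - eapply Rle_trans.
    { apply (sumn_two_sided_bound _ (fun j => (INR j + 1) * (1/3) ^ j)). intros j Hj.
      destruct (gauss1_geometric kap y j Hk Hy) as [G1 G2]. pose proof (pos_INR j).
      specialize (Hg (N - 1 - j)%nat) as Hg1. specialize (Hg (N + j)%nat) as Hg2.
      unfold g in *. rewrite Hlow in * by auto. rewrite Hhigh in *.
      rewrite Rabs_left, Rabs_right by lra.
      split; apply Rmult_le_compat; lra. }
    pose proof (weighted_geometric_sum_le N). lra.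
Qed.

Lemma half_index_reflect (N i : nat) : (i < 2 * N)%nat ->
  IZR (Z.of_nat (2 * N - 1 - i) - Z.of_nat N) + 1/2
  = - (IZR (Z.of_nat i - Z.of_nat N) + 1/2).
Proof.
  intros H.
  assert (E : (Z.of_nat (2 * N - 1 - i) - Z.of_nat N = - (Z.of_nat i - Z.of_nat N) - 1)%Z)
    by lia.
  rewrite E, minus_IZR, opp_IZR. field.
Qed.

Lemma C3_ge (y1 y2 : R) : 54 * PI <= C3 y1 y2.
Proof.
  unfold C3. apply Rle_trans with (C3_one y1); [|apply Rmax_l].
  unfold C3_one. pose proof PI_RGT_0. pose proof PI_4.
  assert (H8 : 2 <= 8 / PI).
  { apply (Rmult_le_reg_r PI); auto. unfold Rdiv. rewrite Rmult_assoc, Rinv_l by lra. lra. }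
  assert (H4 : 1 <= 4 / PI).
  { apply (Rmult_le_reg_r PI); auto. unfold Rdiv. rewrite Rmult_assoc, Rinv_l by lra. lra. }
  assert (Hs : 7/5 <= sqrt (y1 ^ 2 + 8 / PI)).
  { rewrite <- (sqrt_pow2 (7/5)) by lra. apply sqrt_le_1_alt.
    pose proof (pow2_ge_0 y1). lra. }
  pose proof (Rabs_pos y1).
  assert (6.75 <= 4 / PI + 2 * Rabs y1 + 1 / 2 * (sqrt (y1 ^ 2 + 8 / PI) + 2) ^ 2 + 1 / 2)
    by nra.
  nra.
Qed.

Lemma Un_cv_ext (u v : nat -> R) (l : R) : (forall N, u N = v N) -> Un_cv u l -> Un_cv v l.
Proof.
  intros E H e He. destruct (H e He) as [N HN]. exists N. intros k Hk. rewrite <- E. auto.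
Qed.

Lemma cv_zero_of_bound (r : nat -> R) (c : R) : 0 <= c ->
  (forall N, Rabs (r N) <= (4 * INR N + 1) * c / (1 + INR N ^ 2)) -> Un_cv r 0.
Proof.
  intros Hc H eps Heps.
  destruct (INR_unbounded (5 * c / eps)) as [N0 HN0].
  exists (S N0). intros N HN. unfold Rdist. rewrite Rminus_0_r.
  assert (HN1 : INR (S N0) <= INR N) by (apply le_INR; lia).
  rewrite S_INR in HN1.
  assert (Hpos : 0 < INR N) by (pose proof (pos_INR N0); lra).
  eapply Rle_lt_trans; [apply H|].
  assert (5 * c / eps * eps = 5 * c) by (field; lra).
  assert (5 * c < INR N * eps) by nra.
  apply Rle_lt_trans with (5 * c / INR N).
  - unfold Rdiv. apply Rmult_le_reg_r with ((1 + INR N ^ 2) * INR N); [nra|].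
    replace ((4 * INR N + 1) * c * / (1 + INR N ^ 2) * ((1 + INR N ^ 2) * INR N))
      with ((4 * INR N + 1) * c * INR N) by (field; nra).
    replace (5 * c * / INR N * ((1 + INR N ^ 2) * INR N))
      with (5 * c * (1 + INR N ^ 2)) by (field; lra).
    assert (INR N <= 1 + INR N ^ 2) by nra. nra.
  - apply (Rmult_lt_reg_r (INR N)); auto.
    unfold Rdiv. rewrite Rmult_assoc, Rinv_l by lra. lra.
Qed.

Lemma modulus_limit_bound (a b : nat -> R) (A B K : R) :
  Un_cv a A -> Un_cv b B -> 0 <= K ->
  (forall N, sqrt (a N ^ 2 + b N ^ 2) <= K) -> sqrt (A ^ 2 + B ^ 2) <= K.
Proof.
  intros Ha Hb HK H. apply sqrt_le_sq; auto.
  assert (Hc : Un_cv (fun N => a N * a N + b N * b N) (A * A + B * B))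
    by (apply CV_plus; apply CV_mult; auto).
  assert (Hk : Un_cv (fun _ => K ^ 2) (K ^ 2)).
  { intros e He. exists 0%nat. intros. unfold Rdist. rewrite Rminus_diag, Rabs_R0. lra. }
  replace (A ^ 2 + B ^ 2) with (A * A + B * B) by ring.
  refine (Rle_cv_lim _ Hc Hk). intros N.
  specialize (H N). assert (Hx : 0 <= a N * a N + b N * b N) by nra.
  pose proof (sqrt_sqrt _ Hx). pose proof (sqrt_pos (a N * a N + b N * b N)).
  replace (a N ^ 2 + b N ^ 2) with (a N * a N + b N * b N) in H by ring. nra.
Qed.

Lemma square_sum_limit (a : nat -> nat -> nat -> R) (c L : R) : 0 <= c ->
  (forall N i j, (i = 2 * N \/ j = 2 * N)%nat -> Rabs (a N i j) <= c / (1 + INR N ^ 2)) ->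
  Un_cv (fun N => sum2 (a N) (S (2 * N))) L ->
  Un_cv (fun N => sum2 (a N) (2 * N)) L.
Proof.
  intros Hc Hb Hcv.
  set (edge := fun N => sumn (fun i => a N i (2 * N)%nat) (2 * N)
                      + sumn (fun j => a N (2 * N)%nat j) (S (2 * N))).
  assert (Hedge : Un_cv edge 0).
  { apply (cv_zero_of_bound edge c Hc). intros N. unfold edge.
    assert (H1 : Rabs (sumn (fun i => a N i (2 * N)%nat) (2 * N))
                 <= INR (2 * N) * (c / (1 + INR N ^ 2))).
    { eapply Rle_trans; [apply sumn_abs|]. rewrite <- sumn_const. apply sumn_le.
      intros. apply Hb. auto. }
    assert (H2 : Rabs (sumn (fun j => a N (2 * N)%nat j) (S (2 * N)))
                 <= INR (S (2 * N)) * (c / (1 + INR N ^ 2))).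
    { eapply Rle_trans; [apply sumn_abs|]. rewrite <- sumn_const. apply sumn_le.
      intros. apply Hb. auto. }
    rewrite S_INR, mult_INR in H2. rewrite mult_INR in H1. simpl INR in H1, H2.
    assert (0 < 1 + INR N ^ 2) by (pose proof (pow2_ge_0 (INR N)); lra).
    replace ((4 * INR N + 1) * c / (1 + INR N ^ 2)) with
      ((1 + 1) * INR N * (c / (1 + INR N ^ 2))
       + ((1 + 1) * INR N + 1) * (c / (1 + INR N ^ 2))) by (field; lra).
    eapply Rle_trans; [apply Rabs_triang | lra]. }
  pose proof (CV_minus _ _ _ _ Hcv Hedge) as H. rewrite Rminus_0_r in H.
  refine (Un_cv_ext _ _ _ _ H).
  intros N. unfold edge, sum2. cbn [sumn].
  rewrite (sumn_plus (fun i => sumn (fun j => a N i j) (2 * N)) (fun i => a N i (2 * N)%nat)).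
  ring.
Qed.

Section ThetaEstimates.

(** [tau] has reduced imaginary part [B] with [B11 >= 17/20] (a consequence
    of [B11 >= sqrt 3 / 2]) and [|Re tau_ij| <= 1/2]; [n] bounds [||(X, Y)||]. *)
Variables (t1 t12 t2 : Cx) (x1 x2 y1 y2 n : R).
Hypothesis Htau1 : 17/20 <= Cim t1.
Hypothesis Hred0 : 0 <= 2 * Cim t12.
Hypothesis Hred1 : 2 * Cim t12 <= Cim t1.
Hypothesis Hred2 : Cim t1 <= Cim t2.
Hypothesis HRe1 : Rabs (Cre t1) <= 1/2.
Hypothesis HRe12 : Rabs (Cre t12) <= 1/2.
Hypothesis HRe2 : Rabs (Cre t2) <= 1/2.
Hypotheses (Hx1 : Rabs x1 <= n) (Hx2 : Rabs x2 <= n).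
Hypotheses (Hy1 : Rabs y1 <= n) (Hy2 : Rabs y2 <= n).
Hypothesis Hn : n <= 1/2.

Local Notation z1 := (Cadd (RtoC x1) (Cadd (Cscal y1 t1) (Cscal y2 t12))).
Local Notation z2 := (Cadd (RtoC x2) (Cadd (Cscal y1 t12) (Cscal y2 t2))).
Local Notation qB := (qform (Cim t1) (Cim t12) (Cim t2)).
Local Notation d1 := (distZ (1/2 + y1)).
Local Notation d2 := (distZ (1/2 + y2)).
Local Notation delta := (Rmin d1 d2).
Local Notation kap := (PI * Cim t1 / 2).
Local Notation c1 := (2 * (Cim t1 + Cim t12) + 2).
Local Notation c2 := (2 * (Cim t12 + Cim t2) + 2).

Lemma n_nonneg : 0 <= n.
Proof. pose proof (Rabs_pos x1). lra. Qed.

Lemma y1_range : -1/2 <= y1 <= 1/2.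
Proof. apply abs_le_between in Hy1. lra. Qed.

Lemma y2_range : -1/2 <= y2 <= 1/2.
Proof. apply abs_le_between in Hy2. lra. Qed.

Lemma kap_ge : 5/4 <= kap.
Proof. pose proof PI2_3_2. nra. Qed.

Lemma delta_bounds : 0 <= delta /\ delta <= d1 /\ delta <= d2.
Proof.
  destruct (distZ_bounds (1/2 + y1)) as [D1 _]; [pose proof y1_range; lra|].
  destruct (distZ_bounds (1/2 + y2)) as [D2 _]; [pose proof y2_range; lra|].
  split; [unfold Rmin; destruct (Rle_dec _ _); lra | split; [apply Rmin_l | apply Rmin_r]].
Qed.

Lemma im_z1 : Cim z1 = y1 * Cim t1 + y2 * Cim t12.
Proof. unfold Cadd, Cscal, RtoC, Cim; simpl; ring. Qed.

Lemma im_z2 : Cim z2 = y1 * Cim t12 + y2 * Cim t2.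
Proof. unfold Cadd, Cscal, RtoC, Cim; simpl; ring. Qed.

Lemma re_z1 : Cre z1 = x1 + (Cre t1 * y1 + Cre t12 * y2).
Proof. unfold Cadd, Cscal, RtoC, Cre; simpl; ring. Qed.

Lemma re_z2 : Cre z2 = x2 + (Cre t12 * y1 + Cre t2 * y2).
Proof. unfold Cadd, Cscal, RtoC, Cre; simpl; ring. Qed.

(** The exponent [2 i pi (1/2 tm tau m + tm (Z + b))] of the term of index
    [m] (with [b = (0, 1/2)]), split into its real and imaginary parts. *)
Definition quad_im (m1 m2 : R) : R :=
  1/2 * (m1 * m1 * Cim t1 + 2 * m1 * m2 * Cim t12 + m2 * m2 * Cim t2).
Definition quad_re (m1 m2 : R) : R :=
  1/2 * (m1 * m1 * Cre t1 + 2 * m1 * m2 * Cre t12 + m2 * m2 * Cre t2).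
Definition lin_im (m1 m2 : R) : R := m1 * Cim z1 + m2 * Cim z2.
Definition lin_re (m1 m2 : R) : R := m1 * Cre z1 + m2 * Cre z2.

Definition term_size (m1 m2 : R) : R := exp (-2 * PI * (quad_im m1 m2 + lin_im m1 m2)).
Definition term_phase (m1 m2 : R) : R := 2 * PI * (quad_re m1 m2 + lin_re m1 m2 + m2 / 2).
Definition term (m1 m2 : R) : Cx :=
  (term_size m1 m2 * cos (term_phase m1 m2), term_size m1 m2 * sin (term_phase m1 m2)).

Lemma theta_term_eq (k1 k2 : Z) :
  theta_term (1/2) (1/2) 0 (1/2) z1 z2 t1 t12 t2 k1 k2 = term (IZR k1 + 1/2) (IZR k2 + 1/2).
Proof.
  unfold theta_term, term, term_size, term_phase, quad_im, quad_re, lin_im, lin_re,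
    Cexp, Cmul, Cscal, Cadd, RtoC, Ci, Cre, Cim.
  simpl. generalize (IZR k1) (IZR k2); intros u v. f_equal; f_equal; try f_equal; field.
Qed.

(** Completing the square: the size of the term of index [m] is
    [exp (pi q(Y) - pi q(m + Y))], [q] being the form of [Im tau]. *)
Lemma term_size_eq (m1 m2 : R) :
  term_size m1 m2 = exp (PI * qB y1 y2 - PI * qB (m1 + y1) (m2 + y2)).
Proof.
  unfold term_size, quad_im, lin_im, qform. rewrite im_z1, im_z2. f_equal. field.
Qed.

Definition term_weight (m1 m2 : R) : R :=
  (2 * Rabs (2 * PI * lin_im m1 m2) + Rabs (2 * PI * lin_re m1 m2)) * term_size m1 m2.

(** The terms of indices [m] and [-m] nearly cancel (since [a = (1/2, 1/2)]
    and [b = (0, 1/2)], their phases differ by [2 * 2 pi lin_re] plus an odd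
    multiple of [pi]). *)
Lemma term_pair_bound (m1 : R) (k2 : Z) :
  let m2 := IZR k2 + 1/2 in
  Cmod (Cadd (term m1 m2) (term (- m1) (- m2)))
  <= term_weight m1 m2 + term_weight (- m1) (- m2).
Proof.
  intros m2.
  set (E := exp (-2 * PI * quad_im m1 m2)).
  set (s := 2 * PI * lin_im m1 m2). set (g := 2 * PI * lin_re m1 m2).
  assert (Hsize1 : term_size m1 m2 = E * exp (- s)).
  { unfold term_size, E, s. rewrite <- exp_plus. f_equal. ring. }
  assert (Hsize2 : term_size (- m1) (- m2) = E * exp s).
  { unfold term_size, E, s, quad_im, lin_im. rewrite <- exp_plus. f_equal. ring. }
  assert (Hs : 2 * PI * lin_im (- m1) (- m2) = - s) by (unfold s, lin_im; ring).
  assert (Hg : 2 * PI * lin_re (- m1) (- m2) = - g) by (unfold g, lin_re; ring).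
  assert (Hphase : term_phase m1 m2 - term_phase (- m1) (- m2)
                   = 2 * g + (2 * IZR k2 + 1) * PI).
  { unfold term_phase, g, quad_re, lin_re, m2. field. }
  pose proof (opposite_pair_bound E s g _ _ k2 (Rlt_le _ _ (exp_pos _)) Hphase) as H.
  unfold term, term_weight. rewrite Hsize1, Hsize2, Hs, Hg, !Rabs_Ropp.
  fold s g. lra.
Qed.

Lemma linear_factor_bound (m1 m2 : R) :
  2 * Rabs (2 * PI * lin_im m1 m2) + Rabs (2 * PI * lin_re m1 m2)
  <= 2 * PI * n * (c1 * Rabs m1 + c2 * Rabs m2).
Proof.
  pose proof n_nonneg. pose proof PI_RGT_0.
  assert (HI1 : Rabs (Cim z1) <= Cim t1 * n + Cim t12 * n).
  { rewrite im_z1, (Rmult_comm y1), (Rmult_comm y2).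
    rewrite <- (Rabs_right (Cim t1)), <- (Rabs_right (Cim t12)) at 2 by lra.
    apply abs_lin_comb; auto. }
  assert (HI2 : Rabs (Cim z2) <= Cim t12 * n + Cim t2 * n).
  { rewrite im_z2, (Rmult_comm y1), (Rmult_comm y2).
    rewrite <- (Rabs_right (Cim t12)), <- (Rabs_right (Cim t2)) at 2 by lra.
    apply abs_lin_comb; auto. }
  assert (HR1 : Rabs (Cre z1) <= 2 * n).
  { rewrite re_z1. eapply Rle_trans; [apply Rabs_triang|].
    pose proof (abs_lin_comb (Cre t1) (Cre t12) y1 y2 n n Hy1 Hy2).
    assert (Rabs (Cre t1) * n + Rabs (Cre t12) * n <= n) by nra. lra. }
  assert (HR2 : Rabs (Cre z2) <= 2 * n).
  { rewrite re_z2. eapply Rle_trans; [apply Rabs_triang|].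
    pose proof (abs_lin_comb (Cre t12) (Cre t2) y1 y2 n n Hy1 Hy2).
    assert (Rabs (Cre t12) * n + Rabs (Cre t2) * n <= n) by nra. lra. }
  pose proof (abs_lin_comb m1 m2 _ _ _ _ HI1 HI2) as HL.
  pose proof (abs_lin_comb m1 m2 _ _ _ _ HR1 HR2) as HG.
  unfold lin_im, lin_re.
  rewrite (Rabs_mult (2 * PI) (m1 * Cim z1 + _)), (Rabs_mult (2 * PI) (m1 * Cre z1 + _)).
  rewrite (Rabs_right (2 * PI)) by lra.
  assert (2 * Rabs (m1 * Cim z1 + m2 * Cim z2) + Rabs (m1 * Cre z1 + m2 * Cre z2)
          <= n * (c1 * Rabs m1 + c2 * Rabs m2)) by lra.
  nra.
Qed.

Lemma term_size_gaussian_bound (k1 k2 : Z) :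
  term_size (IZR k1 + 1/2) (IZR k2 + 1/2)
  <= exp (PI * qB y1 y2) * exp (- PI * ((Cim t1 + Cim t2 - 2 * Cim t12) * delta ^ 2))
     * (gauss1 kap y1 d1 (IZR k1) * gauss1 kap y2 d2 (IZR k2)).
Proof.
  pose proof PI_RGT_0. pose proof y1_range. pose proof y2_range.
  destruct (distZ_bounds (1/2 + y1)) as [D10 [D11 D12]]; [lra|].
  destruct (distZ_bounds (1/2 + y2)) as [D20 [D21 D22]]; [lra|].
  destruct delta_bounds as [Hd0 [Hd1 Hd2]].
  pose proof (reduced_form_lower_bound (Cim t1) (Cim t12) (Cim t2)
                (IZR k1 + (1/2 + y1)) (IZR k2 + (1/2 + y2)) d1 d2 delta
                Hred0 Hred1 Hred2 Hd0 Hd1 Hd2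
                (int_translate_sq_ge k1 _ _ D10 D11 D12)
                (int_translate_sq_ge k2 _ _ D20 D21 D22)) as Hq.
  rewrite term_size_eq. unfold gauss1. rewrite <- !exp_plus. apply exp_le_compat.
  replace (IZR k1 + 1/2 + y1) with (IZR k1 + (1/2 + y1)) by ring.
  replace (IZR k2 + 1/2 + y2) with (IZR k2 + (1/2 + y2)) by ring.
  nra.
Qed.

Definition prefactor : R :=
  2 * PI * n * exp (PI * qB y1 y2)
  * exp (- PI * ((Cim t1 + Cim t2 - 2 * Cim t12) * delta ^ 2)).

Lemma term_weight_bound (k1 k2 : Z) :
  term_weight (IZR k1 + 1/2) (IZR k2 + 1/2)
  <= prefactor * (c1 * Rabs (IZR k1 + 1/2) + c2 * Rabs (IZR k2 + 1/2))
     * (gauss1 kap y1 d1 (IZR k1) * gauss1 kap y2 d2 (IZR k2)).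
Proof.
  unfold term_weight, prefactor.
  pose proof (linear_factor_bound (IZR k1 + 1/2) (IZR k2 + 1/2)) as HL.
  pose proof (term_size_gaussian_bound k1 k2) as HS.
  eapply Rle_trans.
  { apply Rmult_le_compat; [| left; apply exp_pos | exact HL | exact HS].
    pose proof (Rabs_pos (2 * PI * lin_im (IZR k1 + 1/2) (IZR k2 + 1/2))).
    pose proof (Rabs_pos (2 * PI * lin_re (IZR k1 + 1/2) (IZR k2 + 1/2))). lra. }
  right. ring.
Qed.

Definition box_term (N i j : nat) : Cx :=
  theta_term (1/2) (1/2) 0 (1/2) z1 z2 t1 t12 t2
    (Z.of_nat i - Z.of_nat N) (Z.of_nat j - Z.of_nat N).

Lemma symmetric_sum_weight_bound (N : nat) :
  let k := fun i => IZR (Z.of_nat i - Z.of_nat N) in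
  sqrt (sum2 (fun i j => Cre (box_term N i j)) (2 * N) ^ 2
        + sum2 (fun i j => Cim (box_term N i j)) (2 * N) ^ 2)
  <= sum2 (fun i j => term_weight (k i + 1/2) (k j + 1/2)) (2 * N).
Proof.
  intros k. apply pairing_bound. intros i j Hi Hj.
  unfold box_term, k. rewrite !theta_term_eq, !half_index_reflect by auto.
  apply term_pair_bound.
Qed.

(* Summing the weights over the box [[-N, N)^2]: the sum separates into
   one-dimensional Gaussian sums, bounded by [3] and [9/2]. *)
Lemma weight_sum_bound (N : nat) :
  let k := fun i => IZR (Z.of_nat i - Z.of_nat N) in
  sum2 (fun i j => term_weight (k i + 1/2) (k j + 1/2)) (2 * N)
  <= prefactor * (27/2 * (c1 + c2)).
Proof.
  intros k.
  set (w := fun i => Rabs (INR i - INR N + 1/2)).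
  set (g1 := fun i => gauss1 kap y1 d1 (INR i - INR N)).
  set (g2 := fun i => gauss1 kap y2 d2 (INR i - INR N)).
  eapply Rle_trans.
  { apply (sum2_le _ (fun i j => prefactor * (c1 * w i + c2 * w j) * (g1 i * g2 j))).
    intros i j _ _. unfold k, w, g1, g2. rewrite <- !IZR_shift. apply term_weight_bound. }
  replace (2 * N)%nat with (N + N)%nat by lia. rewrite sum2_separable.
  destruct (gauss1_sums kap y1 N kap_ge y1_range) as [F1 A1].
  destruct (gauss1_sums kap y2 N kap_ge y2_range) as [F2 A2].
  fold g1 in F1. fold g2 in F2.
  change (sumn (fun i => w i * g1 i) (N + N) <= 9/2) in A1.
  change (sumn (fun i => w i * g2 i) (N + N) <= 9/2) in A2.
  assert (Hnonneg : forall f : nat -> R, (forall i, 0 <= f i) -> 0 <= sumn f (N + N))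
    by (intros f Hf; apply sumn_nonneg; auto).
  assert (Hg1 : forall i, 0 <= g1 i) by (intros; left; apply exp_pos).
  assert (Hg2 : forall i, 0 <= g2 i) by (intros; left; apply exp_pos).
  assert (Hw : forall i, 0 <= w i) by (intros; apply Rabs_pos).
  pose proof (Hnonneg g1 Hg1). pose proof (Hnonneg g2 Hg2).
  pose proof (Hnonneg (fun i => w i * g1 i) (fun i => Rmult_le_pos _ _ (Hw i) (Hg1 i))).
  pose proof (Hnonneg (fun i => w i * g2 i) (fun i => Rmult_le_pos _ _ (Hw i) (Hg2 i))).
  assert (Hpre : 0 <= prefactor).
  { unfold prefactor. pose proof PI_RGT_0. pose proof n_nonneg.
    pose proof (exp_pos (PI * qB y1 y2)).
    pose proof (exp_pos (- PI * ((Cim t1 + Cim t2 - 2 * Cim t12) * delta ^ 2))).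
    apply Rmult_le_pos; [apply Rmult_le_pos|]; try lra. apply Rmult_le_pos; lra. }
  apply Rmult_le_compat_l; auto.
  assert (sumn (fun i => w i * g1 i) (N + N) * sumn g2 (N + N) <= 9/2 * 3)
    by (apply Rmult_le_compat; lra).
  assert (sumn g1 (N + N) * sumn (fun j => w j * g2 j) (N + N) <= 3 * (9/2))
    by (apply Rmult_le_compat; lra).
  nra.
Qed.

Lemma term_size_decay (m1 m2 r : R) : r ^ 2 <= (m1 + y1) ^ 2 + (m2 + y2) ^ 2 ->
  term_size m1 m2 <= exp (PI * qB y1 y2) / (1 + r ^ 2).
Proof.
  intros Hr. pose proof PI2_3_2. pose proof (pow2_ge_0 r).
  assert (Hsq : forall u, 0 ^ 2 <= u ^ 2) by (intros; rewrite pow_i by lia; apply pow2_ge_0).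
  pose proof (reduced_form_lower_bound (Cim t1) (Cim t12) (Cim t2) (m1 + y1) (m2 + y2)
                0 0 0 Hred0 Hred1 Hred2 (Rle_refl 0) (Rle_refl 0) (Rle_refl 0)
                (Hsq _) (Hsq _)) as Hq.
  assert (Hdecay : r ^ 2 <= PI * qB (m1 + y1) (m2 + y2)).
  { assert (17/40 * r ^ 2 <= qB (m1 + y1) (m2 + y2)) by nra.
    assert (3 * qB (m1 + y1) (m2 + y2) <= PI * qB (m1 + y1) (m2 + y2)) by nra. lra. }
  rewrite term_size_eq.
  apply Rle_trans with (exp (PI * qB y1 y2) * exp (- r ^ 2)).
  { rewrite <- exp_plus. apply exp_le_compat. lra. }
  rewrite exp_Ropp. pose proof (exp_ineq1_le (r ^ 2)). pose proof (exp_pos (PI * qB y1 y2)).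
  unfold Rdiv. apply Rmult_le_compat_l; [lra|]. apply Rinv_le_contravar; lra.
Qed.

Lemma term_components_le (m1 m2 : R) :
  Rabs (Cre (term m1 m2)) <= term_size m1 m2 /\ Rabs (Cim (term m1 m2)) <= term_size m1 m2.
Proof.
  assert (Hs : 0 < term_size m1 m2) by apply exp_pos.
  pose proof (COS_bound (term_phase m1 m2)). pose proof (SIN_bound (term_phase m1 m2)).
  unfold term, Cre, Cim; cbn [fst snd]. rewrite !Rabs_mult, (Rabs_right (term_size _ _)) by lra.
  split; rewrite <- (Rmult_1_r (term_size m1 m2)) at 2;
    apply Rmult_le_compat_l; try lra; apply Rabs_le; lra.
Qed.

Lemma box_term_edge_bound (N i j : nat) : (i = 2 * N \/ j = 2 * N)%nat ->
  Rabs (Cre (box_term N i j)) <= exp (PI * qB y1 y2) / (1 + INR N ^ 2) /\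
  Rabs (Cim (box_term N i j)) <= exp (PI * qB y1 y2) / (1 + INR N ^ 2).
Proof.
  intros Hij. unfold box_term. rewrite theta_term_eq, !IZR_shift.
  pose proof y1_range. pose proof y2_range. pose proof (pos_INR N).
  assert (Hsize : term_size (INR i - INR N + 1/2) (INR j - INR N + 1/2)
                  <= exp (PI * qB y1 y2) / (1 + INR N ^ 2)).
  { apply term_size_decay.
    assert (Hedge : forall a b : R, 0 <= b -> INR N ^ 2 <= (INR N + b) ^ 2 + a ^ 2)
      by (intros; pose proof (pow2_ge_0 a); nra).
    destruct Hij as [E|E]; subst; rewrite mult_INR; simpl INR.
    - replace ((1 + 1) * INR N - INR N + 1/2 + y1) with (INR N + (1/2 + y1)) by ring.
      apply Hedge. lra.
    - replace ((1 + 1) * INR N - INR N + 1/2 + y2) with (INR N + (1/2 + y2)) by ring.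
      rewrite Rplus_comm. apply Hedge. lra. }
  destruct (term_components_le (INR i - INR N + 1/2) (INR j - INR N + 1/2)).
  split; lra.
Qed.

Lemma theta_modulus_bound (th : Cx) :
  is_theta (1/2) (1/2) 0 (1/2) z1 z2 t1 t12 t2 th ->
  Cmod th <= prefactor * (27/2 * (c1 + c2)).
Proof.
  intros [HcR HcI].
  assert (Hpartial : forall N,
    sqrt (sum2 (fun i j => Cre (box_term N i j)) (2 * N) ^ 2
          + sum2 (fun i j => Cim (box_term N i j)) (2 * N) ^ 2)
    <= prefactor * (27/2 * (c1 + c2))).
  { intros N. eapply Rle_trans; [apply symmetric_sum_weight_bound | apply weight_sum_bound]. }
  assert (Hsquare : forall N,
    Cre (theta_partial (1/2) (1/2) 0 (1/2) z1 z2 t1 t12 t2 N)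
      = sum2 (fun i j => Cre (box_term N i j)) (S (2 * N)) /\
    Cim (theta_partial (1/2) (1/2) 0 (1/2) z1 z2 t1 t12 t2 N)
      = sum2 (fun i j => Cim (box_term N i j)) (S (2 * N))).
  { intros N. unfold theta_partial, sum2, Cre at 1, Cim at 1. cbn zeta. cbn [fst snd].
    rewrite !sum_f_R0_sumn. split; apply sumn_ext; intros; rewrite sum_f_R0_sumn; reflexivity. }
  pose proof (exp_pos (PI * qB y1 y2)).
  apply (modulus_limit_bound (fun N => sum2 (fun i j => Cre (box_term N i j)) (2 * N))
                             (fun N => sum2 (fun i j => Cim (box_term N i j)) (2 * N))).
  - apply (square_sum_limit (fun N i j => Cre (box_term N i j)) (exp (PI * qB y1 y2))); [lra| |].
    + intros. apply box_term_edge_bound; auto.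
    + refine (Un_cv_ext _ _ _ _ HcR). intros N. apply Hsquare.
  - apply (square_sum_limit (fun N i j => Cim (box_term N i j)) (exp (PI * qB y1 y2))); [lra| |].
    + intros. apply box_term_edge_bound; auto.
    + refine (Un_cv_ext _ _ _ _ HcI). intros N. apply Hsquare.
  - eapply Rle_trans; [apply sqrt_pos | apply (Hpartial 0%nat)].
  - exact Hpartial.
Qed.

(** [tIm Z (Im tau)^(-1) Im Z = q(Y)] since [Im Z = (Im tau) Y]. *)
Lemma imZ_quad_eq : imZ_quad t1 t12 t2 (Cim z1) (Cim z2) = qB y1 y2.
Proof.
  unfold imZ_quad, qform. rewrite im_z1, im_z2. field. nra.
Qed.

Lemma normalized_theta_bound (th : Cx) :
  is_theta (1/2) (1/2) 0 (1/2) z1 z2 t1 t12 t2 th ->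
  Cmod th * exp (- PI * imZ_quad t1 t12 t2 (Cim z1) (Cim z2))
  <= n * (4 + 3/2 * (Cim t1 + Cim t2)) * C3 y1 y2
     * exp (- (PI * (Cim t1 + Cim t2 - 2 * Cim t12) * delta ^ 2)).
Proof.
  intros Hth. rewrite imZ_quad_eq.
  set (G := exp (- (PI * (Cim t1 + Cim t2 - 2 * Cim t12) * delta ^ 2))).
  assert (Hcancel : prefactor * exp (- PI * qB y1 y2) = 2 * PI * n * G).
  { assert (E1 : exp (PI * qB y1 y2) * exp (- PI * qB y1 y2) = 1).
    { rewrite <- exp_plus. replace (PI * qB y1 y2 + - PI * qB y1 y2) with 0 by ring.
      apply exp_0. }
    unfold prefactor, G.
    replace (- PI * ((Cim t1 + Cim t2 - 2 * Cim t12) * delta ^ 2))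
      with (- (PI * (Cim t1 + Cim t2 - 2 * Cim t12) * delta ^ 2)) by ring.
    set (G' := exp (- (PI * (Cim t1 + Cim t2 - 2 * Cim t12) * delta ^ 2))).
    transitivity (2 * PI * n * G' * (exp (PI * qB y1 y2) * exp (- PI * qB y1 y2))); [ring|].
    rewrite E1. ring. }
  (* the constants: [2 pi * 27/2 (c1 + c2) <= 54 pi (4 + 3/2 Tr B) <= C3 (4 + 3/2 Tr B)] *)
  assert (Hconst : 2 * PI * (27/2 * (c1 + c2)) <= (4 + 3/2 * (Cim t1 + Cim t2)) * C3 y1 y2).
  { pose proof PI_RGT_0. pose proof (C3_ge y1 y2).
    assert (54 * PI * (4 + 3/2 * (Cim t1 + Cim t2))
            <= (4 + 3/2 * (Cim t1 + Cim t2)) * C3 y1 y2)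
      by (rewrite Rmult_comm; apply Rmult_le_compat_l; lra).
    assert (c1 + c2 <= 2 * (4 + 3/2 * (Cim t1 + Cim t2))) by lra.
    assert (2 * PI * (27/2 * (c1 + c2)) <= 2 * PI * (27/2 * (2 * (4 + 3/2 * (Cim t1 + Cim t2)))))
      by (apply Rmult_le_compat_l; lra).
    lra. }
  assert (HnG : 0 <= n * G) by (apply Rmult_le_pos; [apply n_nonneg | left; apply exp_pos]).
  apply Rle_trans with (prefactor * (27/2 * (c1 + c2)) * exp (- PI * qB y1 y2)).
  { apply Rmult_le_compat_r; [left; apply exp_pos | apply theta_modulus_bound; exact Hth]. }
  replace (prefactor * (27/2 * (c1 + c2)) * exp (- PI * qB y1 y2))
    with (prefactor * exp (- PI * qB y1 y2) * (27/2 * (c1 + c2))) by ring.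
  rewrite Hcancel.
  replace (2 * PI * n * G * (27/2 * (c1 + c2))) with ((n * G) * (2 * PI * (27/2 * (c1 + c2))))
    by ring.
  replace (n * (4 + 3/2 * (Cim t1 + Cim t2)) * C3 y1 y2 * G)
    with ((n * G) * ((4 + 3/2 * (Cim t1 + Cim t2)) * C3 y1 y2)) by ring.
  apply Rmult_le_compat_l; assumption.
Qed.

End ThetaEstimates.

(** In [F_2], [|tau1| >= 1] (take [C = (1 0; 0 0)], [D = (0 0; 0 1)]) and
    [|Re tau1| <= 1/2], hence [Im tau1 >= sqrt 3 / 2 >= 17/20]. *)
Lemma F2_im_tau1_ge (t1 t12 t2 : Cx) : in_F2 t1 t12 t2 -> 17/20 <= Cim t1.
Proof.
  intros [[H0 _] [Hsp [_ [HR1 _]]]].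
  assert (Hs : is_Sp4Z (mkM2Z 0 0 0 1) (mkM2Z (-1) 0 0 0) (mkM2Z 1 0 0 0) (mkM2Z 0 0 0 1))
    by (unfold is_Sp4Z; repeat split; reflexivity).
  specialize (Hsp _ _ _ _ Hs).
  assert (E : Cmod (det_Ctau_D (mkM2Z 1 0 0 0) (mkM2Z 0 0 0 1) t1 t12 t2)
              = sqrt (Cre t1 ^ 2 + Cim t1 ^ 2)).
  { unfold det_Ctau_D, Cmod, Csub, Cmul, Cadd, RtoC, Cre, Cim. simpl. f_equal. ring. }
  rewrite E in Hsp.
  assert (Hx : 0 <= Cre t1 ^ 2 + Cim t1 ^ 2) by nra.
  pose proof (sqrt_sqrt _ Hx). pose proof (sqrt_pos (Cre t1 ^ 2 + Cim t1 ^ 2)).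
  assert (1 <= Cre t1 ^ 2 + Cim t1 ^ 2) by nra.
  apply abs_le_between in HR1.
  nra.
Qed.

Lemma sup_norm_bounds (x1 x2 y1 y2 : R) :
  let nXY := Rmax (Rmax (Rabs x1) (Rabs x2)) (Rmax (Rabs y1) (Rabs y2)) in
  Rabs x1 <= nXY /\ Rabs x2 <= nXY /\ Rabs y1 <= nXY /\ Rabs y2 <= nXY.
Proof.
  intros nXY. unfold nXY.
  repeat split; eapply Rle_trans;
    [apply Rmax_l | apply Rmax_l | apply Rmax_r | apply Rmax_l
    | apply Rmax_l | apply Rmax_r | apply Rmax_r | apply Rmax_r].
Qed.

Lemma sup_norm_pos (x1 x2 y1 y2 : R) : (x1, x2, y1, y2) <> (0, 0, 0, 0) ->
  0 < Rmax (Rmax (Rabs x1) (Rabs x2)) (Rmax (Rabs y1) (Rabs y2)).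
Proof.
  intros Hne. destruct (sup_norm_bounds x1 x2 y1 y2) as [H1 [H2 [H3 H4]]].
  destruct (Req_dec x1 0) as [e1|e1]; [|pose proof (Rabs_pos_lt x1 e1); lra].
  destruct (Req_dec x2 0) as [e2|e2]; [|pose proof (Rabs_pos_lt x2 e2); lra].
  destruct (Req_dec y1 0) as [e3|e3]; [|pose proof (Rabs_pos_lt y1 e3); lra].
  destruct (Req_dec y2 0) as [e4|e4]; [|pose proof (Rabs_pos_lt y2 e4); lra].
  exfalso. apply Hne. subst. reflexivity.
Qed.

Lemma Cmod_pos (z : Cx) : z <> (0, 0) -> 0 < Cmod z.
Proof.
  intros Hz. destruct z as [a b]. unfold Cmod, Cre, Cim; cbn [fst snd].
  apply sqrt_lt_R0.
  destruct (Req_dec a 0) as [ea|ea]; [destruct (Req_dec b 0) as [eb|eb]|].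
  - exfalso. apply Hz. subst. reflexivity.
  - pose proof (pow2_ge_0 a). pose proof (Rsqr_pos_lt b eb). unfold Rsqr in *. nra.
  - pose proof (pow2_ge_0 b). pose proof (Rsqr_pos_lt a ea). unfold Rsqr in *. nra.
Qed.

Lemma neg_log_lower_bound (A n T C D : R) :
  0 < A -> 0 < n -> 0 < T -> 0 < C -> A <= n * T * C * exp (- D) ->
  - ln A >= D - ln T + ln (1 / n) - ln C.
Proof.
  intros HA Hn HT HC Hle.
  apply ln_le_compat in Hle; auto.
  rewrite !ln_mult, ln_exp in Hle by (try apply exp_pos; repeat apply Rmult_lt_0_compat; auto).
  replace (1 / n) with (/ n) by (field; lra). rewrite ln_Rinv by lra.
  lra.
Qed.

Theorem mainTheorem10 (t1 t12 t2 : Cx) (x1 x2 y1 y2 : R) (th : Cx) :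
  in_F2 t1 t12 t2 ->
  (x1, x2, y1, y2) <> (0, 0, 0, 0) ->
  Rmax (Rmax (Rabs x1) (Rabs x2)) (Rmax (Rabs y1) (Rabs y2)) <= 1/2 ->
  (* Z = X + tau Y *)
  let z1 := Cadd (RtoC x1) (Cadd (Cscal y1 t1) (Cscal y2 t12)) in
  let z2 := Cadd (RtoC x2) (Cadd (Cscal y1 t12) (Cscal y2 t2)) in
  (* th = theta_{a,b}(Z, tau) with a = (1/2, 1/2), b = (0, 1/2) *)
  is_theta (1/2) (1/2) 0 (1/2) z1 z2 t1 t12 t2 th ->
  th <> (0, 0) ->
  let Lambda := - ln (Cmod th * exp (- PI * imZ_quad t1 t12 t2 (Cim z1) (Cim z2))) in
  let nXY := Rmax (Rmax (Rabs x1) (Rabs x2)) (Rmax (Rabs y1) (Rabs y2)) in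
  let delta := Rmin (distZ (1/2 + y1)) (distZ (1/2 + y2)) in
  let trB := Cim t1 + Cim t2 in
  Lambda >= PI * (trB - 2 * Cim t12) * delta ^ 2
            - ln (4 + 3/2 * trB) + ln (1 / nXY) - ln (C3 y1 y2).
Proof.
  intros HF Hne Hn z1 z2 Hth Hth0 Lambda nXY delta trB.
  pose proof (F2_im_tau1_ge _ _ _ HF) as Htau1.
  destruct HF as [_ [_ [[Hred0 [Hred1 Hred2]] [HRe1 [HRe12 HRe2]]]]].
  destruct (sup_norm_bounds x1 x2 y1 y2) as [Hx1 [Hx2 [Hy1 Hy2]]].
  pose proof (normalized_theta_bound t1 t12 t2 x1 x2 y1 y2 nXY Htau1 Hred0 Hred1 Hred2
                HRe1 HRe12 HRe2 Hx1 Hx2 Hy1 Hy2 Hn th Hth) as Hbound.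
  pose proof (C3_ge y1 y2). pose proof PI_RGT_0.
  apply neg_log_lower_bound.
  - apply Rmult_lt_0_compat; [apply Cmod_pos; exact Hth0 | apply exp_pos].
  - apply sup_norm_pos; exact Hne.
  - unfold trB. lra.
  - lra.
  - exact Hbound.
Qed.
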